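(* The function $S$ is monotonically increasing on $[1,n]$: for $1\leq t'<t\leq n$ we have $S(t')\leq S(t)$. Moreover, if $S(t')>0$ for some $t'\in[1,n]$, then $S(t')<S(t)$ for all $t\in(t',n]$, i.e. $S$ is strictly increasing on $[t',n]$.
   Context: Let $G$ be a simple graph with vertex set $V=\{1,\dots,n\}$, edge set $E$ and adjacency matrix $A$. Let $e$ be the all-ones vector, $\langle M,N\rangle=\operatorname{trace}(M^TN)$, and $X\geq 0$ mean entrywise nonnegativity. For real $t$ with $1\leq t\leq n$, $Q(t)$ is the semidefinite program $$\min \tfrac12\langle A,X\rangle\ \text{ s.t. } X\succeq 0,\ X\geq 0,\ \operatorname{trace}(X)=t,\ Xe=t\operatorname{diag}(X)$$ over symmetric $n\times n$ matrices $X$, and $S(t)$ denotes its optimal value. *)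

From HB Require Import structures.
From mathcomp Require Import all_boot all_order all_algebra.
From mathcomp Require Import boolp classical_sets reals.
Set Implicit Arguments. Unset Strict Implicit. Unset Printing Implicit Defensive.
Import Order.TTheory GRing.Theory Num.Theory.
Local Open Scope ring_scope.
Local Open Scope classical_set_scope.

Definition simple_graph (n : nat) (E : rel 'I_n) : Prop :=
  symmetric E /\ irreflexive E.

Definition adjmx (R : realType) (n : nat) (E : rel 'I_n) : 'M[R]_n :=
  \matrix_(i, j) (E i j)%:R.

Definition frob (R : realType) (n : nat) (M N : 'M[R]_n) : R := \tr (M^T *m N).

Definition psd (R : realType) (n : nat) (X : 'M[R]_n) : Prop :=
  X^T = X /\ forall v : 'cV[R]_n, 0 <= (v^T *m X *m v) 0 0.

Definition Qfeas (R : realType) (n : nat) (t : R) : set 'M[R]_n :=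
  [set X | psd X /\ (forall i j, 0 <= X i j) /\ \tr X = t /\
           X *m const_mx 1 = t *: (\col_i X i i)].

Definition Sval (R : realType) (n : nat) (E : rel 'I_n) (t : R) : R :=
  inf [set (2%:R)^-1 * frob (adjmx R E) X | X in @Qfeas R n t].

(* If X is feasible for Q(t) and 1 <= t' < t, then
   Y = a X + b Diag(X) with a = t'(t'-1)/(t(t-1)) and b = t'(t-t')/(t(t-1))
   is feasible for Q(t'): both coefficients are nonnegative, and they are the
   unique ones making trace(Y) = t' and Ye = t' diag(Y).  Since A has zero
   diagonal, <A,Y> = a <A,X>, hence S(t') <= a S(t) with 0 <= a < 1.  As
   S >= 0 (A and X are entrywise nonnegative), S(t') <= S(t), and the
   inequality is strict as soon as S(t') > 0. *)

From HB Require Import structures.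
From mathcomp Require Import all_boot all_order all_algebra.
From mathcomp Require Import boolp classical_sets reals.
From mathcomp Require Import ring lra.
Set Implicit Arguments.
Unset Strict Implicit.
Unset Printing Implicit Defensive.
Import Order.TTheory GRing.Theory Num.Theory.
Local Open Scope ring_scope.
Local Open Scope classical_set_scope.

Section Matrices.
Variables (R : realType) (n : nat).
Implicit Types (X Y M : 'M[R]_n) (a b : R).

Definition diag_part X : 'M[R]_n := diag_mx (\row_i X i i).

Lemma tr_diag_part X : \tr (diag_part X) = \tr X.
Proof. by rewrite mxtrace_diag; apply: eq_bigr => i _; rewrite mxE. Qed.

Lemma quad_formD (v : 'cV[R]_n) a b X Y :
  (v^T *m (a *: X + b *: Y) *m v) 0 0 =
  a * (v^T *m X *m v) 0 0 + b * (v^T *m Y *m v) 0 0.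
Proof. by rewrite mulmxDr mulmxDl -!scalemxAr -!scalemxAl !mxE. Qed.

Lemma psd_conic a b X Y : 0 <= a -> 0 <= b -> psd X -> psd Y ->
  psd (a *: X + b *: Y).
Proof.
move=> a_ge0 b_ge0 [XT Xq] [YT Yq]; split.
  by rewrite linearD !linearZ /= XT YT.
by move=> v; rewrite quad_formD addr_ge0 // mulr_ge0.
Qed.

Lemma psd_diag_part X : (forall i, 0 <= X i i) -> psd (diag_part X).
Proof.
move=> Xii_ge0; split; first by rewrite tr_diag_mx.
move=> v; rewrite mul_mx_diag !mxE; apply: sumr_ge0 => i _.
by rewrite !mxE mulrAC -expr2 mulr_ge0 ?sqr_ge0.
Qed.

Lemma frob_conic M a b X Y :
  frob M (a *: X + b *: Y) = a * frob M X + b * frob M Y.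
Proof. by rewrite /frob mulmxDr -!scalemxAr mxtraceD !mxtraceZ. Qed.

Lemma frob_diag_part M X : (forall i, M i i = 0) -> frob M (diag_part X) = 0.
Proof.
move=> M0; rewrite /frob mul_mx_diag /mxtrace; apply: big1 => i _.
by rewrite !mxE M0 mul0r.
Qed.

Lemma frob_ge0 M X : (forall i j, 0 <= M i j) -> (forall i j, 0 <= X i j) ->
  0 <= frob M X.
Proof.
move=> M_ge0 X_ge0; rewrite /frob /mxtrace; apply: sumr_ge0 => i _.
by rewrite !mxE; apply: sumr_ge0 => k _; rewrite !mxE mulr_ge0.
Qed.

End Matrices.

Section Feasibility.
Variables (R : realType) (n : nat).

Definition shrink_coef (t' t : R) : R := t' * (t' - 1) / (t * (t - 1)).
Definition diag_coef (t' t : R) : R := t' * (t - t') / (t * (t - 1)).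

Lemma shrink_coef_ge0 (t' t : R) : 1 <= t' -> 1 < t -> 0 <= shrink_coef t' t.
Proof. by move=> t'_ge1 t_gt1; rewrite divr_ge0 ?mulr_ge0 //; lra. Qed.

Lemma shrink_coef_lt1 (t' t : R) : 1 <= t' -> t' < t -> shrink_coef t' t < 1.
Proof.
move=> t'_ge1 lt_t't; rewrite ltr_pdivrMr ?mul1r; last by rewrite mulr_gt0 //; lra.
have : t' * (t' - 1) <= t' * (t - 1) by rewrite ler_wpM2l //; lra.
have : t' * (t - 1) < t * (t - 1) by rewrite ltr_pM2r //; lra.
lra.
Qed.

Lemma Qfeas_const1 : @Qfeas R n n%:R (const_mx 1).
Proof.
split; [split|split; [|split]].
- by rewrite trmx_const.
- move=> v; set e : 'cV[R]_n := const_mx 1.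
  have -> : const_mx 1 = e *m e^T.
    by apply/matrixP => i j; rewrite !mxE big_ord1 !mxE mulr1.
  rewrite mulmxA -mulmxA -[e^T *m v]trmxK trmx_mul trmxK.
  set u := v^T *m e.
  by rewrite [(u *m _) _ _]mxE big_ord1 [u^T _ _]mxE -expr2 sqr_ge0.
- by move=> i j; rewrite mxE.
- by rewrite /mxtrace; under eq_bigr do rewrite mxE; rewrite sumr_const card_ord.
- apply/matrixP => i j; rewrite !mxE.
  by under eq_bigr do rewrite !mxE mulr1; rewrite sumr_const card_ord mulr1.
Qed.

Lemma Qfeas_shrink (t' t : R) (X : 'M[R]_n) : 1 <= t' -> t' <= t -> 1 < t ->
  @Qfeas R n t X ->
  @Qfeas R n t' (shrink_coef t' t *: X + diag_coef t' t *: diag_part X).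
Proof.
move=> t'_ge1 le_t't t_gt1 [X_psd [X_ge0 [trX rowX]]].
have tt1_gt0 : 0 < t * (t - 1) by rewrite mulr_gt0 //; lra.
have b_ge0 : 0 <= diag_coef t' t by rewrite divr_ge0 ?mulr_ge0 //; lra.
have a_ge0 := shrink_coef_ge0 t'_ge1 t_gt1.
split; [|split; [|split]].
- by apply: psd_conic => //; apply: psd_diag_part.
- move=> i j; rewrite !mxE.
  by apply: addr_ge0; apply: mulr_ge0; rewrite ?mulrn_wge0 ?X_ge0.
- by rewrite mxtraceD !mxtraceZ tr_diag_part trX /shrink_coef /diag_coef; field; lra.
- apply/matrixP => i j.
  have rowXi : (X *m const_mx 1) i j = t * X i i by rewrite rowX !mxE.
  rewrite mulmxDl -!scalemxAl [LHS]mxE [(_ *: (X *m _)) _ _]mxE rowXi.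
  rewrite mul_diag_mx !mxE eqxx mulr1n mulr1.
  by rewrite /shrink_coef /diag_coef; field; lra.
Qed.

End Feasibility.

Section OptimalValue.
Variables (R : realType) (n : nat) (E : rel 'I_n).
Hypothesis E_irr : irreflexive E.

Local Notation objective X := (2%:R^-1 * frob (adjmx R E) X).
Local Notation values t := [set objective X | X in @Qfeas R n t].

Lemma objective_ge0 (X : 'M[R]_n) : (forall i j, 0 <= X i j) -> 0 <= objective X.
Proof.
move=> X_ge0; rewrite mulr_ge0 ?invr_ge0 ?ler0n // frob_ge0 // => i j.
by rewrite mxE ler0n.
Qed.

Lemma objective_shrink (a b : R) (X : 'M[R]_n) :
  objective (a *: X + b *: diag_part X) = a * objective X.
Proof.
rewrite frob_conic frob_diag_part => [|i]; last by rewrite mxE E_irr.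
by rewrite mulr0 addr0 mulrCA.
Qed.

Lemma Qfeas_nonempty (t : R) : 1 < t -> t <= n%:R -> exists X, @Qfeas R n t X.
Proof.
move=> t_gt1 t_le_n; eexists.
by apply: Qfeas_shrink (Qfeas_const1 R n) => //; lra.
Qed.

Lemma values_lbound (t : R) : lbound (values t) 0.
Proof. by move=> _ [X [_ [X_ge0 _]] <-]; apply: (objective_ge0 X_ge0). Qed.

Lemma Sval_ge0 (t : R) : 1 < t -> t <= n%:R -> 0 <= Sval E t.
Proof.
move=> t_gt1 t_le_n; have [X X_feas] := Qfeas_nonempty t_gt1 t_le_n.
by apply: lb_le_inf; [exists (objective X), X | apply: values_lbound].
Qed.

Lemma Sval_le_shrink (t' t : R) : 1 <= t' -> t' < t -> t <= n%:R ->
  Sval E t' <= shrink_coef t' t * Sval E t.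
Proof.
move=> t'_ge1 lt_t't t_le_n; set a := shrink_coef t' t.
have t_gt1 : 1 < t := le_lt_trans t'_ge1 lt_t't.
have a_ge0 : 0 <= a := shrink_coef_ge0 t'_ge1 t_gt1.
have le_Sval_obj X : @Qfeas R n t X -> Sval E t' <= a * objective X.
  move=> X_feas; rewrite -(objective_shrink _ (diag_coef t' t)).
  apply: ge_inf; first by exists 0; apply: values_lbound.
  by eexists; first exact: Qfeas_shrink (ltW lt_t't) t_gt1 X_feas.
have [X X_feas] := Qfeas_nonempty t_gt1 t_le_n.
have [a0|a_gt0] := eqVneq a 0.
  by have := le_Sval_obj X X_feas; rewrite a0 !mul0r.
have {a_gt0}a_gt0 : 0 < a by rewrite lt_def a_gt0.
rewrite -ler_pdivrMl //; apply: lb_le_inf; first by exists (objective X), X.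
by move=> _ [Y Y_feas <-]; rewrite ler_pdivrMl ?le_Sval_obj.
Qed.

End OptimalValue.

Theorem mainTheorem10 (R : realType) (n : nat) (E : rel 'I_n)
  (hG : simple_graph E) :
  (forall t' t : R, 1 <= t' -> t' < t -> t <= n%:R -> Sval E t' <= Sval E t) /\
  (forall t' : R, 1 <= t' -> t' <= n%:R -> 0 < Sval E t' ->
     forall t : R, t' < t -> t <= n%:R -> Sval E t' < Sval E t).
Proof.
have [_ E_irr] := hG.
have Sval_mono (t' t : R) : 1 <= t' -> t' < t -> t <= n%:R -> Sval E t' <= Sval E t.
  move=> t'_ge1 lt_t't t_le_n.
  apply: le_trans (Sval_le_shrink E_irr t'_ge1 lt_t't t_le_n) _.
  apply: ler_piMl; last exact/ltW/shrink_coef_lt1.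
  by apply: Sval_ge0 _ t_le_n; apply: le_lt_trans t'_ge1 lt_t't.
split=> // t' t'_ge1 _ S_gt0 t lt_t't t_le_n.
apply: le_lt_trans (Sval_le_shrink E_irr t'_ge1 lt_t't t_le_n) _.
rewrite gtr_pMl ?shrink_coef_lt1 //.
exact: lt_le_trans S_gt0 (Sval_mono t' t t'_ge1 lt_t't t_le_n).
Qed.
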